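(* Let $P\in\mathcal{M}$ be the data-generating distribution, let $\boldsymbol{\psi}=(\psi_k)_{k\in\mathbb{K}}$ be a regularization of a parameter $\psi:\mathcal{M}\to\Theta$, and let $d$ be a distance such that $\boldsymbol{\psi}$ is continuous at $P$ with respect to $d$ with family of moduli of continuity $(\delta_k)_{k\in\mathbb{K}}$. Suppose $d(P_n,P)=o_P(1)$. Then there exists a sequence $(k_n)_{n\in\mathbb{N}}$ in $\mathbb{K}$ such that $$B_{k_n}(P)=o(1)\quad\text{and}\quad \delta_{k_n}(d(P_n,P))=o_P(1),$$ and $$\|\psi_{k_n}(P_n)-\psi(P)\|_\Theta=o_P(1).$$
   Context: Let $\mathbb{Z}\subseteq\mathbb{R}^d$, let $\mathcal{P}(\mathbb{Z})$ be the set of Borel probability measures on $\mathbb{Z}$ and $ca(\mathbb{Z})$ the space of signed Borel measures of finite variation. Data $Z_1,Z_2,\dots$ are IID with law $P$; $\mathbf{P}$ is the induced product probability on $\mathbb{Z}^\infty$, and $o_P,O_P$ refer to $\mathbf{P}$. A model is a subset $\mathcal{M}\subseteq\mathcal{P}(\mathbb{Z})$; a parameter is a map $\psi:\mathcal{M}\to\Theta$ where $(\Theta,\|\cdot\|_\Theta)$ is a normed space. $\mathcal{D}$ denotes the set of discretely supported probability measures on $\mathbb{Z}$ and $P_n=n^{-1}\sum_{i=1}^n\delta_{Z_i}\in\mathcal{D}$ the empirical distribution. A tuning set is a subset $\mathbb{K}\subseteq\mathbb{R}_+$ unbounded from above. A regularization of $\psi$ is a family $\boldsymbol{\psi}=(\psi_k)_{k\in\mathbb{K}}$,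 $\mathbb{K}$ a tuning set, with $\psi_k:\mathbb{D}_\psi\subseteq ca(\mathbb{Z})\to\Theta$ for a set $\mathbb{D}_\psi\supseteq\mathcal{M}\cup\mathcal{D}$, such that for every $P\in\mathcal{M}$ the approximation error $B_k(P):=\|\psi_k(P)-\psi(P)\|_\Theta$ tends to $0$ as $k\to\infty$. A modulus of continuity is a continuous non-decreasing $f:\mathbb{R}_+\to\mathbb{R}_+$ with $f(t)=0$ iff $t=0$. The regularization is continuous at $P\in\mathbb{D}_\psi$ with respect to $d$ if there is a family of moduli of continuity $(\delta_k)$ with $\|\psi_k(P')-\psi_k(P)\|_\Theta\le\delta_k(d(P',P))$ for all $k\in\mathbb{K}$ and all $P'\in\mathbb{D}_\psi$. *)

From HB Require Import structures.
From mathcomp Require Import all_boot all_order all_algebra.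
From mathcomp Require Import all_classical all_reals all_analysis.

Set Implicit Arguments.
Unset Strict Implicit.
Unset Printing Implicit Defensive.

Import Order.TTheory GRing.Theory Num.Theory.
Import numFieldNormedType.Exports.

Local Open Scope classical_set_scope.
Local Open Scope ring_scope.

(* Set functions on the sample space; elements of ca(Z), P(Z), D are
   represented by their underlying set functions. *)
Definition setfun {dZ} (Z : measurableType dZ) (R : realType) :=
  set Z -> \bar R.

(* ca(Z): signed (Borel) measures of finite variation = finite-valued
   countably additive set functions = MathComp-Analysis charges. *)
Definition is_signed_measure {dZ} {Z : measurableType dZ} {R : realType}
  (m : setfun Z R) : Prop :=
  exists c : {charge set Z -> \bar R}, (c : set Z -> \bar R) = m.

Definition is_probability {dZ} {Z : measurableType dZ} {R : realType}
  (m : setfun Z R) : Prop :=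
  exists p : probability Z R, (p : set Z -> \bar R) = m.

Definition is_discrete_probability {dZ} {Z : measurableType dZ}
  {R : realType} (m : setfun Z R) : Prop :=
  is_probability m /\
  exists (x : nat -> Z) (w : nat -> R),
    (forall i, 0 <= w i) /\
    (\sum_(0 <= i <oo) (w i)%:E = 1)%E /\
    forall A, measurable A ->
      m A = (\sum_(0 <= i <oo) (w i * \1_A (x i))%:E)%E.

Definition empirical {dZ} {Z : measurableType dZ} {R : realType}
  {Omega : Type} (X : nat -> Omega -> Z) (n : nat) (w : Omega)
  : setfun Z R :=
  fun A => ((n%:R)^-1 * \sum_(i < n) \1_A (X i w))%:E.

Definition mutually_independent {dO dZ} {Omega : measurableType dO}
  {Z : measurableType dZ} {R : realType} (Pr : probability Omega R)
  (X : nat -> Omega -> Z) : Prop :=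
  forall (I : seq nat) (A : nat -> set Z), uniq I ->
    (forall i, measurable (A i)) ->
    Pr (\bigcap_(i in [set j | j \in I]) (X i @^-1` A i)) =
    (\prod_(i <- I) Pr (X i @^-1` A i))%E.

Definition iid_with_law {dO dZ} {Omega : measurableType dO}
  {Z : measurableType dZ} {R : realType} (Pr : probability Omega R)
  (X : nat -> Omega -> Z) (P : setfun Z R) : Prop :=
  (forall i, measurable_fun setT (X i)) /\
  (forall i A, measurable A -> Pr (X i @^-1` A) = P A) /\
  mutually_independent Pr X.

(* Y_n = o_P(1): convergence to 0 in (outer) probability,
   i.e. P*(|Y_n| > eps) -> 0 for every eps > 0. *)
Definition oP1 {dO} {Omega : measurableType dO} {R : realType}
  (Pr : probability Omega R) (Y : nat -> Omega -> R) : Prop :=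
  forall eps : R, 0 < eps -> forall eta : R, 0 < eta ->
    \forall n \near \oo, exists A : set Omega,
      [/\ measurable A, [set w | eps < `|Y n w|] `<=` A & (Pr A <= eta%:E)%E].

Definition tuning_set {R : realType} (K : set R) : Prop :=
  (forall k, K k -> 0 <= k) /\ (forall M : R, exists2 k, K k & M < k).

Definition vanishes_along {R : realType} (K : set R) (f : R -> R) : Prop :=
  forall eps : R, 0 < eps -> exists k0 : R,
    forall k, K k -> k0 <= k -> `|f k| < eps.

Definition modulus_of_continuity {R : realType} (f : R -> R) : Prop :=
  [/\ {within [set t : R | 0 <= t], continuous f},
      (forall s t, 0 <= s -> s <= t -> f s <= f t),
      (forall t, 0 <= t -> 0 <= f t) &
      (forall t, 0 <= t -> (f t = 0 <-> t = 0))].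

Definition regularization {dZ} {Z : measurableType dZ} {R : realType}
  {Theta : normedModType R} (M : set (setfun Z R)) (psi : setfun Z R -> Theta)
  (K : set R) (Dpsi : set (setfun Z R)) (psik : R -> setfun Z R -> Theta)
  : Prop :=
  [/\ tuning_set K,
      (forall m, Dpsi m -> is_signed_measure m),
      (forall m, M m -> Dpsi m),
      (forall m, is_discrete_probability m -> Dpsi m) &
      (forall P, M P -> vanishes_along K (fun k => `|psik k P - psi P|))].

Definition distance_on {dZ} {Z : measurableType dZ} {R : realType}
  (Dpsi : set (setfun Z R)) (dist : setfun Z R -> setfun Z R -> R) : Prop :=
  [/\ (forall m m', 0 <= dist m m'),
      (forall m m', Dpsi m -> Dpsi m' -> (dist m m' = 0 <-> m = m')),
      (forall m m', Dpsi m -> Dpsi m' -> dist m m' = dist m' m) &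
      (forall m1 m2 m3, Dpsi m1 -> Dpsi m2 -> Dpsi m3 ->
         dist m1 m3 <= dist m1 m2 + dist m2 m3)].

Definition continuous_regularization_at {dZ} {Z : measurableType dZ}
  {R : realType} {Theta : normedModType R} (K : set R)
  (Dpsi : set (setfun Z R)) (psik : R -> setfun Z R -> Theta)
  (dist : setfun Z R -> setfun Z R -> R) (delta : R -> R -> R)
  (P : setfun Z R) : Prop :=
  (forall k, K k -> modulus_of_continuity (delta k)) /\
  (forall k P', K k -> Dpsi P' -> `|psik k P' - psik k P| <= delta k (dist P' P)).

(* A diagonal argument.  Choose k_j in K with k_j -> oo, and t_j > 0 such
   that delta_{k_j} < 1/(j+1) on [0, t_j]; as d(P_n, P) = o_P(1) there is
   N_j beyond which P*(d(P_n, P) > t_j) <= 1/(j+1).  With j(n) the largest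
   j <= n such that N_j <= n, j(n) -> oo, so k_n := k_{j(n)} -> oo and
   B_{k_n}(P) -> 0, while P*(delta_{k_n}(d(P_n, P)) > 1/(j(n)+1)) <= 1/(j(n)+1)
   -> 0.  Finally
   ||psi_{k_n}(P_n) - psi(P)|| <= delta_{k_n}(d(P_n, P)) + B_{k_n}(P). *)

From HB Require Import structures.
From mathcomp Require Import all_boot all_order all_algebra.
From mathcomp Require Import all_classical all_reals all_analysis.
Import Order.TTheory GRing.Theory Num.Theory.
Import numFieldNormedType.Exports.
Local Open Scope classical_set_scope.
Local Open Scope ring_scope.

Lemma nneseries_fin_supp {R : realType} (f : nat -> R) n :
  (forall i, 0 <= f i) -> (forall i, (n <= i)%N -> f i = 0) ->
  (\sum_(0 <= i <oo) (f i)%:E = (\sum_(i < n) f i)%:E)%E.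
Proof.
move=> f_ge0 f_supp; rewrite (@nneseries_split R _ 0 n) => [|k _]; last by rewrite lee_fin.
rewrite add0n eseries0 ?adde0 => [|i ni _]; last by rewrite f_supp.
by rewrite big_mkord -sumEFin.
Qed.

Section empirical_measure.
Variables (R : realType) (dZ : measure_display) (Z : measurableType dZ).
Variables (Omega : Type) (X : nat -> Omega -> Z) (n : nat) (w : Omega).
Hypothesis n_gt0 : (0 < n)%N.

Lemma empirical_probability : is_probability (empirical (R:=R) X n w).
Proof.
pose mu : {measure set Z -> \bar R} := msum (fun i => \d_(X i w)) n.
have muE A : mu A = (\sum_(i < n) \1_A (X i w))%:E by rewrite /= /msum sumEFin.
have muT : mu setT = n%:R%:E.
  by rewrite muE; under eq_bigr do rewrite indicT; rewrite sumr_const card_ord.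
exists (mnormalize mu (\d_(X 0%N w))); apply/funext => A /=; unfold mnormalize.
by rewrite muT eqe pnatr_eq0 eqn0Ngt n_gt0 /= muE -EFinM mulrC.
Qed.

Lemma empirical_discrete : is_discrete_probability (empirical (R:=R) X n w).
Proof.
split; first exact: empirical_probability.
pose wt i : R := if (i < n)%N then n%:R^-1 else 0.
have wt_ge0 i : 0 <= wt i by rewrite /wt; case: ifP.
have wt_supp i : (n <= i)%N -> wt i = 0 by rewrite /wt ltnNge => ->.
exists (fun i => X i w), wt; split=> //; split=> [|A _].
  rewrite (nneseries_fin_supp _ _ wt_ge0 wt_supp) /wt.
  under eq_bigr do rewrite ltn_ord.
  by rewrite sumr_const card_ord -[_ *+ n]mulr_natr mulVf // pnatr_eq0 -lt0n.
rewrite (@nneseries_fin_supp _ (fun i => wt i * \1_A (X i w)) n) => [||i ni].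
- by rewrite /empirical mulr_sumr; congr (_%:E); apply: eq_bigr => i _; rewrite /wt ltn_ord.
- by move=> i; rewrite mulr_ge0.
- by rewrite wt_supp ?mul0r.
Qed.
End empirical_measure.

Section outer_probability.
Context {R : realType} {dO : measure_display} {Omega : measurableType dO}.
Variable Pr : probability Omega R.

Definition outer_prob_le (S : set Omega) (eta : R) : Prop :=
  exists A, [/\ measurable A, S `<=` A & (Pr A <= eta%:E)%E].

Lemma outer_prob_leS S S' eta eta' : S `<=` S' -> eta' <= eta ->
  outer_prob_le S' eta' -> outer_prob_le S eta.
Proof.
move=> SS' eta'_le [A [mA S'A PA]]; exists A; split => //; first exact: subset_trans S'A.
by rewrite (le_trans PA) ?lee_fin.
Qed.

Lemma outer_prob_le1 S : outer_prob_le S 1.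
Proof. by exists setT; rewrite probability_setT. Qed.

Lemma oP1_KyFan {Y : nat -> Omega -> R} {r : nat -> R} : r @ \oo --> 0 ->
  (forall n, outer_prob_le [set w | r n < `|Y n w|] (r n)) -> oP1 Pr Y.
Proof.
move=> /cvgr0Pnorm_lt r0 Yr eps eps_gt0 eta eta_gt0.
have min_gt0 : 0 < Num.min eps eta by rewrite lt_min eps_gt0 eta_gt0.
apply: filterS (r0 _ min_gt0) => n.
rewrite lt_min => /andP[/ltW r_eps /ltW r_eta].
apply: outer_prob_leS (Yr n); last exact: le_trans (ler_norm _) r_eta.
by move=> w /=; apply: le_lt_trans (le_trans (ler_norm _) r_eps).
Qed.

Lemma oP1_le_add_cvg0 {Y U : nat -> Omega -> R} {b : nat -> R} :
  (\forall n \near \oo, forall w, `|Y n w| <= U n w + b n) ->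
  b @ \oo --> 0 -> oP1 Pr U -> oP1 Pr Y.
Proof.
move=> YUb /cvgr0Pnorm_lt b0 U0 eps eps_gt0 eta eta_gt0.
have eps2_gt0 : 0 < eps / 2 by rewrite divr_gt0.
apply: filterS3 YUb (b0 _ eps2_gt0) (U0 _ eps2_gt0 _ eta_gt0) => n YUn bn.
apply: outer_prob_leS (lexx _) => w /= /lt_le_trans /(_ (YUn w)).
move=> eps_lt; apply: lt_le_trans (ler_norm _); rewrite -(ltrD2r (b n)).
apply: lt_trans eps_lt; rewrite {2}(splitr eps) ltrD2l.
exact: le_lt_trans (ler_norm _) bn.
Qed.
End outer_probability.

Lemma modulus_of_continuity_gt {R : realType} {f : R -> R} :
  modulus_of_continuity f -> forall e, 0 < e ->
  exists2 t, 0 < t & forall s, 0 <= s -> e < f s -> t < s.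
Proof.
case=> f_cont _ _ f0 e e_gt0; have f00 : f 0 = 0 by apply/(f0 0 (lexx 0)).
have := proj1 (subspace_continuousP _ _) f_cont 0 (lexx 0).
move=> /cvgr_dist_lt/(_ e e_gt0); rewrite near_withinE => /nbhs_ballP[r /= r_gt0 fr].
exists (r / 2) => [|s s_ge0]; first by rewrite divr_gt0.
apply: contra_lt => s_le; have /fr/(_ s_ge0) : ball (0 : R) r s.
  rewrite -ball_normE /= sub0r normrN ger0_norm //.
  by apply: le_lt_trans s_le _; rewrite ltr_pdivrMr // ltr_pMr // ltr1n.
rewrite /from_subspace f00 sub0r normrN => /ltW; exact: le_trans (ler_norm _).
Qed.

Lemma tuning_set_cvgy {R : realType} {K : set R} : tuning_set K ->
  exists k : nat -> R, (forall j, K (k j)) /\ k @ \oo --> +oo.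
Proof.
case=> _ K_unbounded; have /choice[k kP] : forall j : nat, exists k, K k /\ j%:R < k.
  by move=> j; have [k Kk jk] := K_unbounded j%:R; exists k.
exists k; split => [j|]; first exact: (kP j).1.
apply/cvgryPge => A; apply: filterS (nbhs_infty_ger A) => j /le_trans; apply.
exact/ltW/(kP j).2.
Qed.

Lemma vanishes_along_cvg0 {R : realType} {K : set R} {f : R -> R}
    {T : Type} {F : set_system T} {FF : Filter F} {k : T -> R} :
  vanishes_along K f -> (forall x, K (k x)) -> k @ F --> +oo ->
  f \o k @ F --> 0.
Proof.
move=> fK Kk /cvgryPge k_oo; apply/cvgr0Pnorm_lt => e e_gt0.
have [k0 fk0] := fK e e_gt0; apply: filterS (k_oo k0) => x k0_le.
exact: fk0.
Qed.

Lemma diagonal_index (Q : nat -> nat -> Prop) :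
  (forall n, Q 0%N n) -> (forall j, \forall n \near \oo, Q j n) ->
  exists2 jn : nat -> nat, (forall n, Q (jn n) n) & jn @ \oo --> \oo.
Proof.
move=> Q0 Qev.
have /choice[N QN] : forall j, exists N, forall n, (N <= n)%N -> Q j n.
  by move=> j; have [N _ QN] := Qev j; exists N.
pose jn n := \max_(j < n.+1 | (N j <= n)%N) j.
exists jn => [n|].
  case: (pickP [pred j : 'I_n.+1 | (N j <= n)%N]) => [j Nj | none]; rewrite /jn.
    by rewrite (bigop.bigmax_eq_arg j) //; case: arg_maxnP => // i /QN.
  by rewrite big_pred0.
apply/cvgnyPge => J; exists (maxn J (N J)) => // n /=.
rewrite geq_max -ltnS => /andP[Jn NJn].
exact: (bigop.leq_bigmax_cond (Ordinal Jn) NJn).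
Qed.

Section regularization_error.
Context {R : realType} {dZ : measure_display} {Z : measurableType dZ}.
Context {Theta : normedModType R} {K : set R} {Dpsi : set (setfun Z R)}.
Context {psi : setfun Z R -> Theta} {psik : R -> setfun Z R -> Theta}.
Context {dist : setfun Z R -> setfun Z R -> R} {delta : R -> R -> R}.

Lemma regularization_error_le (P P' : setfun Z R) (k : R) :
  continuous_regularization_at K Dpsi psik dist delta P -> K k -> Dpsi P' ->
  `|psik k P' - psi P| <= delta k (dist P' P) + `|psik k P - psi P|.
Proof.
move=> [_ delta_cont] Kk DP'; apply: le_trans (ler_distD (psik k P) _ _) _.
by rewrite lerD2r delta_cont.
Qed.
End regularization_error.

Theorem theorem1 (R : realType) (dZ : measure_display) (Z : measurableType dZ)
  (dO : measure_display) (Omega : measurableType dO) (Pr : probability Omega R)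
  (Theta : normedModType R)
  (M : set (setfun Z R)) (psi : setfun Z R -> Theta)
  (K : set R) (Dpsi : set (setfun Z R)) (psik : R -> setfun Z R -> Theta)
  (dist : setfun Z R -> setfun Z R -> R) (delta : R -> R -> R)
  (X : nat -> Omega -> Z) (P : setfun Z R) :
  (forall m, M m -> is_probability m) ->
  M P ->
  iid_with_law Pr X P ->
  regularization M psi K Dpsi psik ->
  distance_on Dpsi dist ->
  continuous_regularization_at K Dpsi psik dist delta P ->
  oP1 Pr (fun n w => dist (empirical X n w) P) ->
  exists kn : nat -> R,
    [/\ (forall n, K (kn n)),
        (fun n => `|psik (kn n) P - psi P|) @ \oo --> (0 : R),
        oP1 Pr (fun n w => delta (kn n) (dist (empirical X n w) P)) &
        oP1 Pr (fun n w => `|psik (kn n) (empirical X n w) - psi P|)].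
Proof.
move=> _ MP _ [K_tuning _ _ D_discrete B_vanishes] [dist_ge0 _ _ _].
move=> delta_cont dist_oP1; have [delta_modulus _] := delta_cont.
have [kj [Kkj kj_oo]] := tuning_set_cvgy K_tuning.
have /choice[t tP] : forall j, exists t, 0 < t /\
    forall s, 0 <= s -> harmonic j < delta (kj j) s -> t < s.
  move=> j; have [t t_gt0 small] :=
    modulus_of_continuity_gt (delta_modulus _ (Kkj j)) _ (harmonic_gt0 j).
  by exists t.
pose Q j n := outer_prob_le Pr [set w | t j < `|dist (empirical X n w) P|] (harmonic j).
have [jn Qjn jn_oo] : exists2 jn, forall n, Q (jn n) n & jn @ \oo --> \oo.
  apply: diagonal_index => [n|j]; first by rewrite /Q /= invr1; apply: outer_prob_le1.
  exact: dist_oP1 (tP j).1 _ (harmonic_gt0 j).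
pose kn n := kj (jn n).
have kn_oo : kn @ \oo --> +oo by exact: cvg_comp jn_oo kj_oo.
have B_kn : (fun n => `|psik (kn n) P - psi P|) @ \oo --> 0.
  exact: vanishes_along_cvg0 (B_vanishes P MP) (fun n => Kkj (jn n)) kn_oo.
have delta_kn : oP1 Pr (fun n w => delta (kn n) (dist (empirical X n w) P)).
  apply: (oP1_KyFan Pr (r := harmonic \o jn)) => [|n].
    exact: cvg_comp jn_oo cvg_harmonic.
  move: (Qjn n); apply: outer_prob_leS => // w /=.
  have [_ _ delta_ge0 _] := delta_modulus _ (Kkj (jn n)).
  have d_ge0 := dist_ge0 (empirical X n w) P.
  by rewrite !ger0_norm ?delta_ge0 // => /(tP _).2; apply.
exists kn; split => //; first by move=> n; apply: Kkj.
apply: (oP1_le_add_cvg0 Pr _ B_kn delta_kn).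
(* [empirical X 0] is the zero set function (0^-1 = 0), which lies outside D. *)
exists 1%N => // n /= n_gt0 w; rewrite normr_id.
apply: regularization_error_le delta_cont (Kkj _) _.
exact/D_discrete/empirical_discrete.
Qed.
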